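(* Consider the pairing urn model: an urn initially contains $k=k(n)$ red balls and $n-k$ white balls; at each step one red ball is removed and then a second ball is chosen uniformly at random among the balls remaining in the urn and removed; the process continues until no red ball is left. Let $R_i$ be the number of red balls removed during the first $i$ steps and $T:=\inf\{i\ge0:(k-R_i)/(n-2i)<1/2\}$. If $k(n)=X_0n+o_{\mathbb{P}}(n)$ for some $0<X_0<1$, then with high probability $T<n/2$.
   Context: ''With high probability'' means with probability $1-o(1)$ as $n\to\infty$; $X_n=o_{\mathbb{P}}(n)$ means $X_n/n\to0$ in probability. *)

From Stdlib Require Import Reals.
Open Scope R_scope.

(* State (after i steps): m = n - 2i balls remain, of
   which r are red.  One step (only possible when r >= 1 and m >= 2):
   a red ball is removed, then a second ball is chosen uniformly among the
   m - 1 remaining balls and removed; it is red with probability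
   (r-1)/(m-1) (new state (r-2, m-2)) and white with probability
   (m-r)/(m-1) (new state (r-1, m-2)).

   [hitp m r] is the probability, starting from state (r red, m total) at
   some time i with m = n - 2i, that the process reaches (at the current
   or a later step i' of the process, necessarily with n - 2i' > 0) a state
   with r'/m' < 1/2, i.e. 2 r' < m'.  A state with m = 0 corresponds to i = n/2,
   which is not < n/2.  A state (r,m) = (1,1) cannot hit and the process
   cannot make a further full step with i < n/2. *)
Fixpoint hitp (m : nat) (r : nat) : R :=
  match m with
  | O => 0
  | S m1 =>
      if Nat.ltb (2 * r) (S m1) then 1
      else match m1 with
           | O => 0
           | S m2 =>
               ((INR r - 1) / INR (S m2)) * hitp m2 (r - 2)
               + ((INR (S (S m2)) - INR r) / INR (S m2)) * hitp m2 (r - 1)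
           end
  end.

Definition urn_T_lt_half (n k : nat) : R := hitp n k.

(* Mass that the law mu_n of k(n) (a distribution on {0,...,n}) puts on
   { k : |k - X0 n| > eps n }. *)
Definition dev_mass (mu : nat -> nat -> R) (X0 eps : R) (n : nat) : R :=
  sum_f_R0 (fun k => if Rlt_dec (eps * INR n) (Rabs (INR k - X0 * INR n))
                     then mu n k else 0) n.

(* With w = m - r white balls among m, the quantity W = w (w - 1) / (m - 1)
   is a martingale of the urn, and each step changes it by at most 2, so its
   conditional variance per step is at most 1.  If the red fraction never
   drops below 1/2, the whites never outnumber the reds and the process stops
   with at most one white ball left, where W = 0.  Hence
   P(no hit) * W_0^2 <= E (W_end - W_0)^2 <= n, and since W_0 is of order
   (1 - X0)^2 n when k is close to X0 n, P(no hit) = O(1/n).  Averaging over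
   the law of k, which concentrates near X0 n, gives the claim. *)

From Stdlib Require Import Reals Lra Lia.
Open Scope R_scope.

Lemma nat_ind2 (P : nat -> Prop) :
  P 0%nat -> P 1%nat -> (forall m, P m -> P (S (S m))) -> forall m, P m.
Proof.
  intros H0 H1 HS m.
  enough (P m /\ P (S m)) by tauto.
  induction m as [|m [IH IH1]]; auto.
Qed.

Lemma div_lt_iff a b c : 0 < b -> (a / b < c <-> a < c * b).
Proof.
  intros Hb. split; intros H.
  - apply Rmult_lt_compat_r with (r := b) in H; [|exact Hb].
    now replace (a / b * b) with a in H by (field; lra).
  - apply Rmult_lt_reg_r with b; [exact Hb|].
    now replace (a / b * b) with a by (field; lra).
Qed.

Definition red_prob (m r : nat) : R := (INR r - 1) / (INR m - 1).
Definition white_prob (m r : nat) : R := (INR m - INR r) / (INR m - 1).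

Lemma hitp_SS_lt m r : (2 * r < S (S m))%nat -> hitp (S (S m)) r = 1.
Proof. intros H. cbn [hitp]. apply Nat.ltb_lt in H. now rewrite H. Qed.

Lemma hitp_SS_ge m r : (S (S m) <= 2 * r)%nat ->
  hitp (S (S m)) r = red_prob (S (S m)) r * hitp m (r - 2)
                     + white_prob (S (S m)) r * hitp m (r - 1).
Proof.
  intros H. cbn [hitp]. apply Nat.ltb_ge in H. rewrite H.
  unfold red_prob, white_prob. rewrite (S_INR (S m)) at 2 4.
  now rewrite Rplus_minus_r.
Qed.

Lemma urn_step_probs m r : (2 <= m)%nat -> (1 <= r <= m)%nat ->
  0 <= red_prob m r /\ 0 <= white_prob m r /\ red_prob m r + white_prob m r = 1.
Proof.
  intros Hm [Hr1 Hrm].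
  apply le_INR in Hm, Hr1, Hrm. simpl in Hm, Hr1.
  unfold red_prob, white_prob.
  repeat split; [apply Rle_mult_inv_pos; lra .. | field; lra].
Qed.

(* States with more red balls than balls are unreachable; there the weights of
   the recursion are not probabilities, so they are treated separately. *)
Lemma hitp_zero_of_lt m r : (m < r)%nat -> hitp m r = 0.
Proof.
  revert r. induction m as [| |m IH] using nat_ind2; intros r Hr.
  - reflexivity.
  - cbn [hitp]. replace (Nat.ltb (2 * r) 1) with false by (symmetry; apply Nat.ltb_ge; lia).
    reflexivity.
  - rewrite hitp_SS_ge by lia. rewrite !IH by lia. ring.
Qed.

Lemma hitp_bounds m r : 0 <= hitp m r <= 1.
Proof.
  revert r. induction m as [| |m IH] using nat_ind2; intros r.
  - simpl; lra.
  - cbn [hitp]. destruct (Nat.ltb _ _); lra.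
  - destruct (Nat.lt_ge_cases (2 * r) (S (S m))) as [Hhit|Hstep].
    { rewrite hitp_SS_lt by exact Hhit. lra. }
    destruct (Nat.le_gt_cases r (S (S m))) as [Hr|Hr].
    2: { rewrite hitp_zero_of_lt by exact Hr. lra. }
    rewrite hitp_SS_ge by exact Hstep.
    destruct (urn_step_probs (S (S m)) r ltac:(lia) ltac:(lia)) as (Hp & Hq & Hpq).
    pose proof (IH (r - 2)%nat). pose proof (IH (r - 1)%nat).
    nra.
Qed.

Definition white_potential (m r : nat) : R :=
  (INR m - INR r) * (INR m - INR r - 1) / (INR m - 1).

Lemma white_potential_eq0 m r : (r <= m <= S r)%nat -> white_potential m r = 0.
Proof.
  intros Hr. unfold white_potential.
  destruct (Nat.eq_dec m r) as [->|Hne].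
  - unfold Rdiv. ring.
  - replace m with (S r) by lia. rewrite S_INR. unfold Rdiv. ring.
Qed.

Lemma white_potential_martingale m r : (2 <= m)%nat -> (2 <= r)%nat ->
  white_potential (S (S m)) r =
    red_prob (S (S m)) r * white_potential m (r - 2)
    + white_prob (S (S m)) r * white_potential m (r - 1).
Proof.
  intros Hm Hr.
  unfold white_potential, red_prob, white_prob.
  rewrite !minus_INR by lia. rewrite !S_INR.
  apply le_INR in Hm. simpl in Hm |- *.
  field; lra.
Qed.

Lemma white_potential_increment m r : (2 <= m)%nat -> (2 <= r <= S m)%nat ->
  (white_potential m (r - 2) - white_potential m (r - 1)) ^ 2 <= 4.
Proof.
  intros Hm [Hr2 Hrm].
  unfold white_potential. rewrite !minus_INR by lia.
  apply le_INR in Hm, Hr2, Hrm. rewrite S_INR in Hrm.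
  replace (INR 2) with 2 in * by (simpl; ring). replace (INR 1) with 1 by reflexivity.
  set (x := INR m) in *. set (y := INR r) in *.
  set (z := (x + 1 - y) / (x - 1)).
  replace ((x - (y - 2)) * (x - (y - 2) - 1) / (x - 1)
           - (x - (y - 1)) * (x - (y - 1) - 1) / (x - 1)) with (2 * z)
    by (unfold z; field; lra).
  assert (Hz : 0 <= z <= 1).
  { unfold z. split.
    - apply Rle_mult_inv_pos; lra.
    - apply Rmult_le_reg_r with (x - 1); [lra|].
      unfold Rdiv. rewrite Rmult_assoc, Rinv_l by lra. lra. }
  nra.
Qed.

Lemma mix_moment_step p q W1 W2 h1 h2 a s :
  0 <= p -> 0 <= q -> p + q = 1 -> (W1 - W2) ^ 2 <= 4 ->
  (1 - h1) * a ^ 2 <= (W1 - a) ^ 2 + s ->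
  (1 - h2) * a ^ 2 <= (W2 - a) ^ 2 + s ->
  (1 - (p * h1 + q * h2)) * a ^ 2 <= (p * W1 + q * W2 - a) ^ 2 + s + 1.
Proof.
  intros Hp Hq Hpq HW I1 I2.
  assert (Hvar : p * (W1 - a) ^ 2 + q * (W2 - a) ^ 2
                 = (p * W1 + q * W2 - a) ^ 2 + p * q * (W1 - W2) ^ 2).
  { replace q with (1 - p) by lra. ring. }
  assert (Hpq4 : p * q <= 1 / 4).
  { replace q with (1 - p) by lra. pose proof (pow2_ge_0 (p - 1 / 2)). nra. }
  assert (p * q * (W1 - W2) ^ 2 <= 1).
  { pose proof (pow2_ge_0 (W1 - W2)). pose proof (Rmult_le_pos p q Hp Hq). nra. }
  replace ((1 - (p * h1 + q * h2)) * a ^ 2)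
    with (p * ((1 - h1) * a ^ 2) + q * ((1 - h2) * a ^ 2))
    by (replace q with (1 - p) by lra; ring).
  pose proof (Rmult_le_compat_l p _ _ Hp I1).
  pose proof (Rmult_le_compat_l q _ _ Hq I2).
  nra.
Qed.

(* The target [a] is kept free so that the induction hypothesis applies to the
   successor states; [a := white_potential m r] then gives the tail bound. *)
Lemma nonhit_moment_bound a m r : (r <= m)%nat ->
  (1 - hitp m r) * a ^ 2 <= (white_potential m r - a) ^ 2 + INR m.
Proof.
  assert (Hflat : forall m r, white_potential m r = 0 ->
            (1 - hitp m r) * a ^ 2 <= (white_potential m r - a) ^ 2 + INR m).
  { intros m' r' ->. pose proof (hitp_bounds m' r'). pose proof (pos_INR m').
    pose proof (pow2_ge_0 a). nra. }
  revert r. induction m as [| |m IH] using nat_ind2; intros r Hr.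
  - apply Hflat, white_potential_eq0; lia.
  - apply Hflat, white_potential_eq0; lia.
  - destruct (Nat.le_gt_cases (S (S m)) (S r)) as [Hfull|Hwhites].
    { apply Hflat, white_potential_eq0; lia. }
    destruct (Nat.lt_ge_cases (2 * r) (S (S m))) as [Hhit|Hstep].
    { rewrite hitp_SS_lt by exact Hhit. pose proof (pos_INR (S (S m))).
      pose proof (pow2_ge_0 (white_potential (S (S m)) r - a)). nra. }
    rewrite hitp_SS_ge, white_potential_martingale by lia.
    destruct (urn_step_probs (S (S m)) r ltac:(lia) ltac:(lia)) as (Hp & Hq & Hpq).
    rewrite !S_INR.
    pose proof (mix_moment_step _ _ _ _ _ _ a (INR m) Hp Hq Hpq
                  (white_potential_increment m r ltac:(lia) ltac:(lia))
                  (IH (r - 2)%nat ltac:(lia)) (IH (r - 1)%nat ltac:(lia))).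
    lra.
Qed.

Lemma white_potential_lower m r b : 2 <= b <= INR m - INR r ->
  b ^ 2 / (2 * INR m) <= white_potential m r.
Proof.
  intros Hb. pose proof (pos_INR r) as Hr.
  unfold white_potential.
  set (x := INR m) in *. set (w := x - INR r).
  assert (Hw : b * (b / 2) <= w * (w - 1)) by (unfold w; nra).
  replace (b ^ 2 / (2 * x)) with (b * (b / 2) / x) by (field; lra).
  apply Rle_trans with (w * (w - 1) / x).
  - apply Rmult_le_compat_r; [apply Rlt_le, Rinv_0_lt_compat; lra | exact Hw].
  - apply Rmult_le_compat_l; [unfold w; nra |].
    apply Rinv_le_contravar; lra.
Qed.

Lemma nonhit_bound m r b : (r <= m)%nat -> 2 <= b <= INR m - INR r ->
  1 - hitp m r <= 4 * INR m ^ 3 / b ^ 4.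
Proof.
  intros Hr Hb.
  pose proof (nonhit_moment_bound (white_potential m r) m r Hr) as Hmom.
  rewrite Rminus_diag, pow_ne_zero, Rplus_0_l in Hmom by lia.
  pose proof (white_potential_lower m r b Hb) as Hlow.
  pose proof (pos_INR r).
  assert (Hlow_pos : 0 < b ^ 2 / (2 * INR m)).
  { apply Rdiv_lt_0_compat; [apply pow_lt|]; lra. }
  destruct (hitp_bounds m r) as [_ Hh1].
  assert (Hsq : (b ^ 2 / (2 * INR m)) ^ 2 <= white_potential m r ^ 2)
    by (apply pow_incr; lra).
  replace (4 * INR m ^ 3 / b ^ 4) with (INR m / (b ^ 2 / (2 * INR m)) ^ 2)
    by (field; lra).
  apply Rmult_le_reg_r with ((b ^ 2 / (2 * INR m)) ^ 2); [apply pow_lt; lra|].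
  replace (INR m / (b ^ 2 / (2 * INR m)) ^ 2 * (b ^ 2 / (2 * INR m)) ^ 2)
    with (INR m) by (field; lra).
  nra.
Qed.

Lemma mean_hit_bounds (mu : nat -> nat -> R) X0 c t n :
  (forall k, 0 <= mu n k) -> sum_f_R0 (mu n) n = 1 -> 0 <= t ->
  (forall k, (k <= n)%nat -> Rabs (INR k - X0 * INR n) <= c * INR n ->
     1 - hitp n k <= t) ->
  1 - dev_mass mu X0 c n - t
    <= sum_f_R0 (fun k => mu n k * urn_T_lt_half n k) n <= 1.
Proof.
  intros Hmu Hsum Ht Hgood. unfold urn_T_lt_half. split.
  - assert (Hsplit : dev_mass mu X0 c n + t = sum_f_R0 (fun k =>
        (if Rlt_dec (c * INR n) (Rabs (INR k - X0 * INR n)) then mu n k else 0)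
        + mu n k * t) n).
    { rewrite plus_sum, <- scal_sum, Hsum. unfold dev_mass. ring. }
    enough (1 - sum_f_R0 (fun k => mu n k * hitp n k) n <= dev_mass mu X0 c n + t)
      by lra.
    rewrite Hsplit, <- Hsum at 1. rewrite <- minus_sum. apply sum_Rle.
    intros k Hk. pose proof (Hmu k). destruct (hitp_bounds n k).
    destruct (Rlt_dec _ _) as [_|Hnear].
    + nra.
    + pose proof (Hgood k Hk (Rnot_lt_le _ _ Hnear)). nra.
  - rewrite <- Hsum. apply sum_Rle. intros k _.
    pose proof (Hmu k). destruct (hitp_bounds n k). nra.
Qed.

Theorem lemma6 (X0 : R) (mu : nat -> nat -> R) :
  0 < X0 < 1 ->
  (forall n k, 0 <= mu n k) ->
  (forall n, sum_f_R0 (mu n) n = 1) ->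
  (forall eps, 0 < eps -> Un_cv (dev_mass mu X0 eps) 0) ->
  Un_cv (fun n => sum_f_R0 (fun k => mu n k * urn_T_lt_half n k) n) 1.
Proof.
  intros HX Hmu Hsum Hdev eps Heps.
  set (c := (1 - X0) / 2).
  assert (Hc : 0 < c) by (unfold c; lra).
  destruct (Hdev c Hc (eps / 2) ltac:(lra)) as [N1 HN1].
  destruct (INR_unbounded (Rmax (2 / c) (8 / (c ^ 4 * eps)))) as [N2 HN2].
  exists (Nat.max N1 N2). intros n HnN.
  assert (Hbig : Rmax (2 / c) (8 / (c ^ 4 * eps)) < INR n)
    by (apply Rlt_le_trans with (INR N2); [lra | apply le_INR; lia]).
  apply Rmax_Rlt in Hbig as [Hcn Heps_n].
  assert (Hc4 : 0 < c ^ 4) by (apply pow_lt; lra).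
  apply div_lt_iff in Hcn; [|exact Hc].
  apply div_lt_iff in Heps_n; [|nra].
  assert (Hn : 0 < INR n) by nra.
  set (t := 4 * INR n ^ 3 / (c * INR n) ^ 4).
  assert (Ht : 0 <= t < eps / 2).
  { replace t with (4 / (c ^ 4 * INR n)) by (unfold t; field; lra).
    split; [apply Rlt_le, Rdiv_lt_0_compat|apply div_lt_iff]; nra. }
  assert (Hnear : forall k, (k <= n)%nat -> Rabs (INR k - X0 * INR n) <= c * INR n ->
                    1 - hitp n k <= t).
  { intros k Hk Hdist. apply nonhit_bound; [exact Hk|].
    pose proof (Rle_abs (INR k - X0 * INR n)). unfold c in *. lra. }
  destruct (mean_hit_bounds mu X0 c t n (Hmu n) (Hsum n) (proj1 Ht) Hnear) as [Hlow Hup].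
  specialize (HN1 n ltac:(lia)). unfold R_dist in HN1 |- *.
  rewrite Rminus_0_r in HN1. apply Rabs_def2 in HN1 as [Hdev_n _].
  apply Rabs_def1; lra.
Qed.
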